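(* Let $(R_i)$ and $(S_i)$ be sequences of real numbers all $\ge1$. Let $\nu:\mathbb N^2\to[1,\infty)$ be the unique multiplicative map (i.e. $\nu(xy)=\nu(x)\nu(y)$) with $\nu(1,1)=1$, $\nu(p_i,1)=R_i$ and $\nu(1,p_i)=S_i$ for all $i\in\mathbb N$. Then $\nu$ is an almost monotone weight on $\mathbb N^2$ and $$\Delta(\ell^1(\mathbb N^2,\nu))=\prod_{i=1}^\infty\overline{B(0,R_i)}\times\prod_{i=1}^\infty\overline{B(0,S_i)}.$$
   Context: $p_1<p_2<\cdots$ are the primes; $\overline{B(0,r)}=\{|z|\le r\}$. A weight on $\mathbb N^2$ (coordinatewise multiplication) is $\omega:\mathbb N^2\to[1,\infty)$ with $\omega(xy)\le\omega(x)\omega(y)$; admissible if $\lim_n\omega(l^n,k^n)^{1/n}=1$ for all $(l,k)$; almost monotone if either it is admissible, or there is $K>0$ such that $\omega(m_1,n_1)\le K\omega(m_2,n_2)$ whenever either $m_1\mid m_2$ or $n_1\mid n_2$. $\ell^1(\mathbb N^2,\nu)$ is the weighted Dirichlet-convolution algebra $\{a:\sum|a(m,n)|\nu(m,n)<\infty\}$; its Gel'fand space is identified with the $\nu$-bounded semicharacters (nonzero multiplicative $\chi$ with $|\chi|\le\nu$), each identified with the pair of sequences $((\chi(p_i,1))_i,(\chi(1,p_i))_i)$. *)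

From HB Require Import structures.
From mathcomp Require Import all_boot all_order all_algebra.
From mathcomp Require Import all_classical all_reals all_analysis.
From mathcomp Require Import complex.
Set Implicit Arguments. Unset Strict Implicit. Unset Printing Implicit Defensive.
Import Order.TTheory GRing.Theory Num.Theory.
Local Open Scope ring_scope.
Import numFieldNormedType.Exports.
Local Open Scope classical_set_scope.

(* The i-th prime, indexed from 0: nth_prime 0 = 2 = p_1, nth_prime 1 = 3 = p_2, ...
   (so nth_prime i is p_{i+1} in the paper's notation).
   next_prime n is the least prime strictly greater than n. *)
Lemma next_prime_ex (n : nat) : exists q, (n < q)%N && prime q.
Proof. by case: (prime_above n) => q Hq Pq; exists q; rewrite Hq Pq. Qed.

Definition next_prime (n : nat) : nat := ex_minn (next_prime_ex n).

Fixpoint nth_prime (i : nat) : nat :=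
  match i with
  | 0 => 2
  | i'.+1 => next_prime (nth_prime i')
  end.

(* The multiplicative semigroup N^2 = {(m,n) | m,n >= 1} with coordinatewise
   multiplication is represented by pairs of arguments m n : nat with 0 < m, 0 < n;
   functions on N^2 are functions nat -> nat -> _ whose values at 0 are irrelevant. *)

Definition weight (R : realType) (w : nat -> nat -> R) : Prop :=
  (forall m n, (0 < m)%N -> (0 < n)%N -> 1 <= w m n) /\
  (forall m1 n1 m2 n2, (0 < m1)%N -> (0 < n1)%N -> (0 < m2)%N -> (0 < n2)%N ->
     w (m1 * m2)%N (n1 * n2)%N <= w m1 n1 * w m2 n2).

Definition admissible (R : realType) (w : nat -> nat -> R) : Prop :=
  forall l k, (0 < l)%N -> (0 < k)%N ->
    (fun n : nat => w (l ^ n)%N (k ^ n)%N `^ (n%:R)^-1) @ \oo --> (1 : R).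

Definition almost_monotone (R : realType) (w : nat -> nat -> R) : Prop :=
  admissible w \/
  exists K : R, 0 < K /\
    forall m1 n1 m2 n2, (0 < m1)%N -> (0 < n1)%N -> (0 < m2)%N -> (0 < n2)%N ->
      (m1 %| m2)%N -> (n1 %| n2)%N -> w m1 n1 <= K * w m2 n2.

Definition bounded_semicharacter (R : realType) (nu : nat -> nat -> R)
    (chi : nat -> nat -> R[i]) : Prop :=
  (exists m n, [/\ (0 < m)%N, (0 < n)%N & chi m n != 0]) /\
  (forall m1 n1 m2 n2, (0 < m1)%N -> (0 < n1)%N -> (0 < m2)%N -> (0 < n2)%N ->
     chi (m1 * m2)%N (n1 * n2)%N = chi m1 n1 * chi m2 n2) /\
  (forall m n, (0 < m)%N -> (0 < n)%N -> ComplexField.Normc.normc (chi m n) <= nu m n).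

(* The Gel'fand space Delta(l^1(N^2, nu)), identified (via
   chi |-> ((chi(p_i,1))_i, (chi(1,p_i))_i)) with a set of pairs of sequences. *)
Definition gelfand_space (R : realType) (nu : nat -> nat -> R)
    : set ((nat -> R[i]) * (nat -> R[i])) :=
  [set ab | exists chi, bounded_semicharacter nu chi /\
      (forall i, chi (nth_prime i) 1%N = ab.1 i /\ chi 1%N (nth_prime i) = ab.2 i)].

From HB Require Import structures.
From mathcomp Require Import all_boot all_order all_algebra.
From mathcomp Require Import all_classical all_reals all_analysis.
From mathcomp Require Import complex.
Import Order.TTheory GRing.Theory Num.Theory.
Set Implicit Arguments. Unset Strict Implicit. Unset Printing Implicit Defensive.

(* A multiplicative map on N^2 factors as nu(m,n) = nu(m,1) nu(1,n), and each
   factor is the completely multiplicative extension of its values at the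
   primes.  Hence nu >= 1 everywhere and nu is monotone for divisibility, so it
   is an almost monotone weight.  A nu-bounded semicharacter is likewise
   determined by its values at (p_i,1) and (1,p_i), which are bounded by R_i and
   S_i; conversely, arbitrary values in these discs extend completely
   multiplicatively to a semicharacter bounded by nu. *)

Lemma next_primeP n : [/\ (n < next_prime n)%N, prime (next_prime n) &
  forall q, (n < q)%N -> prime q -> (next_prime n <= q)%N].
Proof.
rewrite /next_prime; case: ex_minnP => q /andP[ltnq pq] minq; split => // r ltnr pr.
by apply: minq; rewrite ltnr pr.
Qed.

Lemma nth_prime_prime i : prime (nth_prime i).
Proof. by case: i => [|i] //=; case: (next_primeP (nth_prime i)). Qed.

Lemma nth_prime_ltS i : (nth_prime i < nth_prime i.+1)%N.
Proof. by case: (next_primeP (nth_prime i)). Qed.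

Lemma nth_prime_gt i : (i < nth_prime i)%N.
Proof. by elim: i => [//|i IH]; apply: leq_ltn_trans IH (nth_prime_ltS i). Qed.

Lemma nth_prime_inj : injective nth_prime.
Proof.
by apply: incn_inj; apply: leq_mono; apply: homo_ltn; [exact: ltn_trans | exact: nth_prime_ltS].
Qed.

Lemma nth_prime_onto_le i p : prime p -> (p <= nth_prime i)%N ->
  exists j, nth_prime j = p.
Proof.
elim: i => [|i IH] pp lepi; first by exists 0%N; apply/eqP; rewrite eqn_leq lepi prime_gt1.
have [/(IH pp)//|ltip] := leqP p (nth_prime i).
exists i.+1; apply/eqP; rewrite eqn_leq lepi.
by have [_ _ ->] := next_primeP (nth_prime i).
Qed.

Lemma nth_prime_onto p : prime p -> exists2 j, (j < p)%N & nth_prime j = p.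
Proof.
move=> pp; have [j <-] := nth_prime_onto_le pp (ltnW (nth_prime_gt p)).
by exists j; rewrite ?nth_prime_gt.
Qed.

Definition prime_index (p : nat) : nat := index p (mkseq nth_prime p).

Lemma prime_indexK p : prime p -> nth_prime (prime_index p) = p.
Proof.
move=> pp; have [j ltjp pj] := nth_prime_onto pp.
have p_in : p \in mkseq nth_prime p by apply/mapP; exists j; rewrite ?mem_iota.
have := nth_index 0%N p_in; rewrite nth_mkseq //.
by rewrite -[X in (_ < X)%N](size_mkseq nth_prime p) index_mem.
Qed.

Lemma nth_primeK i : prime_index (nth_prime i) = i.
Proof. by apply: nth_prime_inj; rewrite prime_indexK // nth_prime_prime. Qed.

Local Open Scope ring_scope.

Section CompletelyMultiplicativeExtension.
Variable T : comNzRingType.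

Definition cmult_ext (f : nat -> T) (m : nat) : T :=
  \prod_(0 <= p < m.+1 | prime p) f p ^+ logn p m.

Lemma cmult_ext_widen f m N : (0 < m)%N -> (m < N)%N ->
  cmult_ext f m = \prod_(0 <= p < N | prime p) f p ^+ logn p m.
Proof.
move=> m_gt0 ltmN; rewrite /cmult_ext (big_cat_nat (leq0n m.+1) ltmN) /=.
rewrite [X in _ = _ * X]big1_seq ?mulr1 // => p /andP[pp].
rewrite mem_index_iota => /andP[ltmp _]; case: (posnP (logn p m)) => [->//|].
by rewrite logn_gt0 mem_primes => /and3P[_ _ /(dvdn_leq m_gt0)]; rewrite leqNgt ltmp.
Qed.

Lemma cmult_ext1 f : cmult_ext f 1 = 1.
Proof. by rewrite /cmult_ext big1 // => p _; rewrite logn1 expr0. Qed.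

Lemma cmult_extM f m1 m2 : (0 < m1)%N -> (0 < m2)%N ->
  cmult_ext f (m1 * m2) = cmult_ext f m1 * cmult_ext f m2.
Proof.
move=> m1_gt0 m2_gt0.
rewrite (@cmult_ext_widen f m1 (m1 * m2).+1) ?ltnS ?leq_pmulr //.
rewrite (@cmult_ext_widen f m2 (m1 * m2).+1) ?ltnS ?leq_pmull // /cmult_ext -big_split.
by apply: eq_bigr => p _; rewrite lognM // exprD.
Qed.

Lemma cmult_ext_prime f q : prime q -> cmult_ext f q = f q.
Proof.
move=> pq; rewrite /cmult_ext big_mkcond big_nat_recr //= pq logn_prime // eqxx expr1.
rewrite big1_seq ?mul1r // => p; rewrite mem_index_iota => /andP[_ ltpq].
by case: ifP => // pp; rewrite logn_prime // ltn_eqF // expr0.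
Qed.

Lemma multiplicative_cmult_ext (g : nat -> T) : g 1%N = 1 ->
  (forall m1 m2, (0 < m1)%N -> (0 < m2)%N -> g (m1 * m2)%N = g m1 * g m2) ->
  forall m, (0 < m)%N -> g m = cmult_ext g m.
Proof.
move=> g1 gM m; elim: m {-2}m (leqnn m) => [|n IH] m lemn m_gt0.
  by move: m_gt0 lemn; case: m.
have [|m_gt1|->] := ltngtP m 1; last by rewrite cmult_ext1 g1.
  by rewrite ltnS leqn0 -(prednK m_gt0).
have pp := pdiv_prime m_gt1; have pdm := pdiv_dvd m; have p_gt0 := prime_gt0 pp.
have q_gt0 : (0 < m %/ pdiv m)%N by rewrite divn_gt0 // dvdn_leq.
rewrite -(divnK pdm) gM // cmult_extM // (cmult_ext_prime g pp).
by rewrite -IH // -ltnS (leq_trans _ lemn) // ltn_Pdiv // prime_gt1.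
Qed.

End CompletelyMultiplicativeExtension.

Section RealExtension.
Variable R : realType.
Implicit Types f g : nat -> R.

Lemma cmult_ext_ge1 f m : (forall p, prime p -> 1 <= f p) -> 1 <= cmult_ext f m.
Proof.
move=> f_ge1; apply: (big_ind (fun x => 1 <= x)) => //; first exact: mulr_ege1.
by move=> p pp; apply/exprn_ege1/f_ge1.
Qed.

Lemma cmult_ext_ge0 f m : (forall p, prime p -> 0 <= f p) -> 0 <= cmult_ext f m.
Proof. by move=> f_ge0; apply: prodr_ge0 => p pp; apply/exprn_ge0/f_ge0. Qed.

Lemma ler_cmult_ext f g m : (forall p, prime p -> 0 <= f p <= g p) ->
  cmult_ext f m <= cmult_ext g m.
Proof.
move=> fg; apply: ler_prod => p pp; have /andP[f_ge0 lefg] := fg p pp.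
by rewrite exprn_ge0 // lerXn2r // nnegrE (le_trans f_ge0).
Qed.

Local Notation normc := (@ComplexField.Normc.normc R).

Lemma normc_ge0 (x : R[i]) : 0 <= normc x.
Proof. by case: x => a b; apply: sqrtr_ge0. Qed.

Lemma normcX (x : R[i]) k : normc (x ^+ k) = normc x ^+ k.
Proof.
elim: k => [|k IH]; first by rewrite !expr0 ComplexField.Normc.normc1.
by rewrite !exprS ComplexField.Normc.normcM IH.
Qed.

Lemma normc_cmult_ext (f : nat -> R[i]) m :
  normc (cmult_ext f m) = cmult_ext (fun p => normc (f p)) m.
Proof.
rewrite /cmult_ext (big_morph _ (@ComplexField.Normc.normcM R) (@ComplexField.Normc.normc1 R)).
by apply: eq_bigr => p _; rewrite normcX.
Qed.

End RealExtension.

Local Open Scope classical_set_scope.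

Section MultiplicativeMap.
Variables (R : realType) (nu : nat -> nat -> R).
Hypothesis nuM : forall m1 n1 m2 n2,
  (0 < m1)%N -> (0 < n1)%N -> (0 < m2)%N -> (0 < n2)%N ->
  nu (m1 * m2)%N (n1 * n2)%N = nu m1 n1 * nu m2 n2.
Hypothesis nu11 : nu 1%N 1%N = 1.

Local Notation normc := (@ComplexField.Normc.normc R).

Lemma nu_cmult_ext m n : (0 < m)%N -> (0 < n)%N ->
  nu m n = cmult_ext (fun p => nu p 1%N) m * cmult_ext (fun p => nu 1%N p) n.
Proof.
move=> m_gt0 n_gt0.
have -> : nu m n = nu m 1%N * nu 1%N n by rewrite -nuM // muln1 mul1n.
congr (_ * _).
  by apply: (multiplicative_cmult_ext (g := nu^~ 1%N)) => // *; rewrite -nuM.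
by apply: (multiplicative_cmult_ext (g := nu 1%N)) => // *; rewrite -nuM.
Qed.

Definition semicharacter_of (a b : nat -> R[i]) (m n : nat) : R[i] :=
  cmult_ext (fun p => a (prime_index p)) m * cmult_ext (fun p => b (prime_index p)) n.

Lemma semicharacter_of_primes a b i :
  semicharacter_of a b (nth_prime i) 1%N = a i /\
  semicharacter_of a b 1%N (nth_prime i) = b i.
Proof.
by rewrite /semicharacter_of !cmult_ext1 !(cmult_ext_prime _ (nth_prime_prime i)) nth_primeK mulr1 mul1r.
Qed.

Lemma semicharacter_ofM a b m1 n1 m2 n2 :
  (0 < m1)%N -> (0 < n1)%N -> (0 < m2)%N -> (0 < n2)%N ->
  semicharacter_of a b (m1 * m2) (n1 * n2) =
  semicharacter_of a b m1 n1 * semicharacter_of a b m2 n2.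
Proof. by move=> *; rewrite /semicharacter_of !cmult_extM // mulrACA. Qed.

Lemma semicharacter_of_bounded a b :
  (forall i, normc (a i) <= nu (nth_prime i) 1%N /\ normc (b i) <= nu 1%N (nth_prime i)) ->
  forall m n, (0 < m)%N -> (0 < n)%N -> normc (semicharacter_of a b m n) <= nu m n.
Proof.
move=> ab_le m n m_gt0 n_gt0.
rewrite ComplexField.Normc.normcM !normc_cmult_ext nu_cmult_ext //.
apply: ler_pM; try apply: cmult_ext_ge0 => *; rewrite ?normc_ge0 //.
  apply: ler_cmult_ext => p pp; rewrite normc_ge0 -{2}(prime_indexK pp).
  exact: (ab_le _).1.
apply: ler_cmult_ext => p pp; rewrite normc_ge0 -{2}(prime_indexK pp).
exact: (ab_le _).2.
Qed.

Lemma gelfand_space_multiplicative : gelfand_space nu =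
  [set ab | forall i, normc (ab.1 i) <= nu (nth_prime i) 1%N /\
                      normc (ab.2 i) <= nu 1%N (nth_prime i)].
Proof.
apply/seteqP; split => [[a b] [chi [[_ [_ chi_le]] chi_ab]] i | [a b] /= ab_le].
  have [<- <-] := chi_ab i; have p_gt0 := prime_gt0 (nth_prime_prime i).
  by split; apply: chi_le.
exists (semicharacter_of a b); split; last exact: semicharacter_of_primes.
split; first by exists 1%N, 1%N; rewrite /semicharacter_of !cmult_ext1 mulr1 oner_neq0.
by split; [exact: semicharacter_ofM | exact: semicharacter_of_bounded].
Qed.

Hypothesis nu_primes_ge1 : forall p, prime p -> 1 <= nu p 1%N /\ 1 <= nu 1%N p.

Lemma multiplicative_ge1 m n : (0 < m)%N -> (0 < n)%N -> 1 <= nu m n.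
Proof.
move=> m_gt0 n_gt0; rewrite nu_cmult_ext //.
by apply: mulr_ege1; apply: cmult_ext_ge1 => p /nu_primes_ge1[].
Qed.

Lemma multiplicative_weight : weight nu.
Proof. by split => [|*]; [exact: multiplicative_ge1 | rewrite nuM]. Qed.

Lemma multiplicative_dvd_monotone m1 n1 m2 n2 :
  (0 < m1)%N -> (0 < n1)%N -> (0 < m2)%N -> (0 < n2)%N ->
  (m1 %| m2)%N -> (n1 %| n2)%N -> nu m1 n1 <= nu m2 n2.
Proof.
move=> m1_gt0 n1_gt0 m2_gt0 n2_gt0 dvd_m dvd_n.
have qm_gt0 : (0 < m2 %/ m1)%N by rewrite divn_gt0 // dvdn_leq.
have qn_gt0 : (0 < n2 %/ n1)%N by rewrite divn_gt0 // dvdn_leq.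
rewrite -(divnK dvd_m) -(divnK dvd_n) nuM // ler_peMl ?multiplicative_ge1 //.
exact: le_trans (multiplicative_ge1 m1_gt0 n1_gt0).
Qed.

Lemma multiplicative_almost_monotone : almost_monotone nu.
Proof.
right; exists 1; split => // *; rewrite mul1r.
exact: multiplicative_dvd_monotone.
Qed.

End MultiplicativeMap.

Theorem mainTheorem9 (R : realType) (Rs Ss : nat -> R) (nu : nat -> nat -> R)
  (hR : forall i, 1 <= Rs i) (hS : forall i, 1 <= Ss i)
  (hmul : forall m1 n1 m2 n2, (0 < m1)%N -> (0 < n1)%N -> (0 < m2)%N -> (0 < n2)%N ->
     nu (m1 * m2)%N (n1 * n2)%N = nu m1 n1 * nu m2 n2)
  (h11 : nu 1%N 1%N = 1)
  (hp1 : forall i, nu (nth_prime i) 1%N = Rs i)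
  (h1p : forall i, nu 1%N (nth_prime i) = Ss i) :
  (weight nu /\ almost_monotone nu) /\
  gelfand_space nu =
    [set ab | forall i, ComplexField.Normc.normc (ab.1 i) <= Rs i /\ ComplexField.Normc.normc (ab.2 i) <= Ss i].
Proof.
have nu_primes_ge1 p : prime p -> 1 <= nu p 1%N /\ 1 <= nu 1%N p.
  by move=> pp; rewrite -(prime_indexK pp) hp1 h1p.
split.
  split; [exact: multiplicative_weight | exact: multiplicative_almost_monotone].
rewrite gelfand_space_multiplicative //.
by apply/seteqP; split => ab /= ab_le i; have := ab_le i; rewrite hp1 h1p.
Qed.
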